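(* Let $q$ be a prime power, let $\lambda \in \mathbb{F}_{q^n}\setminus\mathbb{F}_q$, $t = [\mathbb{F}_q(\lambda):\mathbb{F}_q]$, let $\overline{S}$ be an $\mathbb{F}_{q^t}$-subspace of $\mathbb{F}_{q^n}$ of $\mathbb{F}_{q^t}$-dimension $l>0$, $b \in \mathbb{F}_{q^n}^*$ with $\mathbb{F}_{q^t}\cap b\overline{S}=\{0\}$, $0<m<t$, $k = tl+m$ with $t+1 \le k \le n$, and $S = \overline{S} \oplus b\langle 1, \lambda, \ldots, \lambda^{m-1}\rangle_{\mathbb{F}_q}$, with $Y=\langle S\rangle_{\mathbb{F}_{q^t}} = \mathbb{F}_{q^n}$, $2m \ge t-1$ and $r = 2m+t(l-1)$. If $\mathcal{C}=\mathrm{Orb}(S)$ is an $r$-FWS code and $\mu \in \mathbb{F}_{q^n}^*$ with $\mu \notin H(\overline{S})$, then $\dim_{\mathbb{F}_q}(S \cap \mu S) = t(l-1)+2m$.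
   Context: $\mathrm{Orb}(S)=\{\alpha S:\alpha\in\mathbb{F}_{q^n}^*\}$. For an $\mathbb{F}_q$-subspace $V$ of $\mathbb{F}_{q^n}$, $H(V) = \{x \in \mathbb{F}_{q^n}^* : xV = V\} \cup \{0\}$. With $d(U,V)=2k-2\dim_{\mathbb{F}_q}(U\cap V)$ and $\omega_{2i}(\mathcal{C})=|\{\alpha S: \alpha\in\mathbb{F}_{q^n}^*, d(S,\alpha S)=2i\}|$ for $i=1,\dots,k$, $\mathcal{C}$ is an $r$-FWS code if $\omega_{2i}=0$ for $i=k-r+1,\ldots,k$ and $\omega_{2i}\neq 0$ for all $i=1,\ldots,k-r$. $\langle S\rangle_{\mathbb{F}_{q^t}}$ denotes the $\mathbb{F}_{q^t}$-span of $S$. *)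

From HB Require Import structures.
From mathcomp Require Import all_boot all_order all_algebra all_field.
Set Implicit Arguments. Unset Strict Implicit. Unset Printing Implicit Defensive.
Import GRing.Theory.
Local Open Scope ring_scope.
Local Open Scope vspace_scope.

(* Setting: F = F_q a finite field, L = F_{q^n} a finite extension of F
   (a fieldExtType over F, so L is finite since F is); an F_q-subspace of
   F_{q^n} is an element of {vspace L}. *)

Section Defs.
Variables (F : finFieldType) (L : fieldExtType F).

Definition smul (a : L) (V : {vspace L}) : {vspace L} := (<[a]> * V)%VS.

Definition Hstab (V : {vspace L}) : pred L :=
  fun x => (x == 0%R) || (smul x V == V).

Definition sdist (U V : {vspace L}) : nat :=
  (2 * \dim U - 2 * \dim (U :&: V))%N.

(* omega_{2i}(Orb S) = |{alpha S : alpha in L^*, d(S, alpha S) = 2i}|,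
   counted as the number of distinct subspaces alpha S *)
Definition omega (S : {vspace L}) (i : nat) : nat :=
  size (undup [seq smul (a : L) S | a <- enum (finvect_type L)
                 & (a != 0%R) && (sdist S (smul (a : L) S) == 2 * i)%N]).

Definition is_FWS (S : {vspace L}) (r : nat) : Prop :=
  (forall i, (\dim S - r + 1 <= i <= \dim S)%N -> omega S i = 0%N) /\
  (forall i, (1 <= i <= \dim S - r)%N -> omega S i <> 0%N).

Definition powspan (lam : L) (m : nat) : {vspace L} :=
  <<[seq (lam ^+ j)%R | j <- iota 0 m]>>%VS.

End Defs.

From HB Require Import structures.
From mathcomp Require Import all_boot all_order all_algebra all_field.
From mathcomp Require Import zify.
Set Implicit Arguments. Unset Strict Implicit. Unset Printing Implicit Defensive.
Import GRing.Theory.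
Local Open Scope ring_scope.
Local Open Scope vspace_scope.

(* Let k = dim S = tl + m and d = dim (S :&: mu S).  As mu is not in H(Sbar),
   the F_{q^t}-module Sbar + mu Sbar strictly contains Sbar; its dimension is a
   multiple of t, hence at least t(l + 1).  It lies in S + mu S, so
   d = 2k - dim (S + mu S) <= t(l - 1) + 2m = r.  Conversely d(S, mu S) = 2(k - d),
   so d < r would make omega_(k - d) nonzero although k - r + 1 <= k - d, which
   the r-FWS property forbids. *)

Section Powspan.
Variables (F : finFieldType) (L : fieldExtType F) (lam : L).

Lemma powspan_dim_adjoin : powspan lam (\dim <<1; lam>>) = <<1; lam>>%VS.
Proof.
have dimKx := dim_Fadjoin 1%AS lam; rewrite /= dimv1 muln1 in dimKx.
rewrite dimKx (Fadjoin_eq_sum 1%AS lam) /Fadjoin_sum /powspan span_def big_map.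
rewrite -{1}[adjoin_degree _ _]subn0 -/(index_iota 0 _) big_mkord.
by apply: eq_bigr => i _; rewrite prod1v.
Qed.

Lemma free_powers : free [seq (lam ^+ i)%R | i <- iota 0 (\dim <<1; lam>>)].
Proof. by rewrite /free -/(powspan lam _) powspan_dim_adjoin size_map size_iota. Qed.

Lemma dim_powspan m : (m <= \dim <<1; lam>>)%N -> \dim (powspan lam m) = m.
Proof.
move=> le_m; have := free_powers; rewrite -(subnKC le_m) iotaD map_cat.
by move=> /catl_free /eqP; rewrite size_map size_iota.
Qed.

End Powspan.

Section Orbits.
Variables (F : finFieldType) (L : fieldExtType F).
Implicit Types (V S : {vspace L}) (K : {subfield L}) (a : L).

Lemma dim_smul a V : a != 0%R -> \dim (smul a V) = \dim V.
Proof. by move=> nz_a; rewrite /smul prodvC dim_cosetv. Qed.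

Lemma notHstab_neq0 V a : ~~ Hstab V a -> a != 0%R.
Proof. by apply: contraNneq => ->; rewrite /Hstab eqxx. Qed.

Lemma smul_module K V a : (K * V <= V)%VS -> (K * smul a V <= smul a V)%VS.
Proof. by move=> modV; rewrite /smul prodvCA prodvSr. Qed.

Lemma dim_addv_smul_gt V a : ~~ Hstab V a -> (\dim V < \dim (V + smul a V))%N.
Proof.
move=> notHa; have nz_a := notHstab_neq0 notHa.
rewrite ltnNge; apply: contra notHa => le_dim.
have /eqP defV : V == (V + smul a V)%VS by rewrite eqEdim addvSl.
have aV_V : (smul a V <= V)%VS by rewrite [X in (_ <= X)%VS]defV addvSr.
by rewrite /Hstab eqEdim aV_V dim_smul ?leqnn ?orbT.
Qed.

Lemma dvdn_ltn_addr d m n : (d %| m)%N -> (d %| n)%N -> (m < n)%N -> (m + d <= n)%N.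
Proof.
move=> /dvdnP[p ->] /dvdnP[q ->]; rewrite -mulSnr.
by case: d => [|d]; rewrite ?muln0 // ltn_pmul2r // leq_pmul2r.
Qed.

Lemma dim_addv_smul_module K V a :
  (K * V <= V)%VS -> ~~ Hstab V a -> (\dim V + \dim K <= \dim (V + smul a V))%N.
Proof.
move=> modV notHa; apply: dvdn_ltn_addr; rewrite ?field_module_dimS //.
  by rewrite prodvDr addvS // smul_module.
exact: dim_addv_smul_gt.
Qed.

Lemma dim_capv_smul_addv S a :
  a != 0%R -> (\dim (S :&: smul a S) + \dim (S + smul a S) = 2 * \dim S)%N.
Proof. by move=> nz_a; rewrite addnC dimv_sum_cap dim_smul // mul2n addnn. Qed.

Lemma field_module_dim_capv_smul K V S a :
  (K * V <= V)%VS -> (V <= S)%VS -> ~~ Hstab V a ->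
  (\dim (S :&: smul a S) + (\dim V + \dim K) <= 2 * \dim S)%N.
Proof.
move=> modV sVS notHa; have nz_a := notHstab_neq0 notHa.
rewrite -(dim_capv_smul_addv S nz_a) leq_add2l.
apply: leq_trans (dim_addv_smul_module modV notHa) (dimvS _).
by rewrite addvS // /smul prodvSr.
Qed.

Lemma omega_neq0 S a i :
  a != 0%R -> sdist S (smul a S) = (2 * i)%N -> omega S i != 0%N.
Proof.
move=> nz_a dist_aS; rewrite /omega -lt0n -has_predT.
apply/hasP; exists (smul a S) => //; rewrite mem_undup.
apply/mapP; exists (a : finvect_type L) => //.
by rewrite mem_filter nz_a dist_aS eqxx (@mem_enum (finvect_type L)).
Qed.

Lemma FWS_dim_capv_smul S r a :
  is_FWS S r -> a != 0%R -> (minn r (\dim S) <= \dim (S :&: smul a S))%N.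
Proof.
move=> [omega0 _] nz_a; set d := \dim (S :&: _); rewrite leqNgt; apply/negP => lt_d.
have dist_aS : sdist S (smul a S) = (2 * (\dim S - d))%N by rewrite /sdist mulnBr.
apply: (negP (omega_neq0 nz_a dist_aS)); apply/eqP/omega0; move: lt_d; rewrite leq_min; lia.
Qed.

End Orbits.

Theorem theorem4p9 (F : finFieldType) (L : fieldExtType F)
    (lam : L) (Sbar : {vspace L}) (b mu : L) (l m : nat) :
  let n := \dim {:L} in
  let Fqt := <<1%VS; lam>>%VS in   (* F_q(lambda) = F_{q^t} *)
  let t := \dim Fqt in
  let k := (t * l + m)%N in
  let S := (Sbar + smul b (powspan lam m))%VS in
  let r := (2 * m + t * (l - 1))%N in
  lam \notin 1%VS ->
  (Fqt * Sbar <= Sbar)%VS ->        (* Sbar is an F_{q^t}-subspace *)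
  \dim Sbar = (t * l)%N ->          (* of F_{q^t}-dimension l *)
  (0 < l)%N ->
  b != 0%R ->
  (Fqt :&: smul b Sbar = 0)%VS ->
  (0 < m < t)%N ->
  (t + 1 <= k <= n)%N ->
  directv (Sbar + smul b (powspan lam m)) ->   (* the sum defining S is direct *)
  (Fqt * S)%VS = fullv ->           (* <S>_{F_{q^t}} = F_{q^n} *)
  (t - 1 <= 2 * m)%N ->
  is_FWS S r ->
  mu != 0%R ->
  ~~ Hstab Sbar mu ->
  \dim (S :&: smul mu S) = (t * (l - 1) + 2 * m)%N.
Proof.
move=> ? ? t ? S r _ modSbar dimSbar l_gt0 nz_b _ /andP[_ lt_mt] _ dxS _ _ FWS_S nz_mu notH.
have dimS : \dim S = (t * l + m)%N.
  by rewrite (directvP dxS) /= dimSbar dim_smul // dim_powspan // ltnW.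
have ub : (\dim (S :&: smul mu S) + (\dim Sbar + t) <= 2 * \dim S)%N :=
  field_module_dim_capv_smul modSbar (addvSl _ _) notH.
have lb := FWS_dim_capv_smul FWS_S nz_mu.
have le_t_tl : (t <= t * l)%N by rewrite leq_pmulr.
move: ub lb; rewrite dimS dimSbar /r mulnBr muln1; lia.
Qed.
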